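(* (a) Over QHC, Hilbert's No Ignorabimus Principle is equivalent to the schema $\nabla\alpha\leftrightarrow\neg\neg\alpha$ (for all problems $\alpha$): adding either schema to QHC as new axioms makes all instances of the other derivable. (b) Over QHC, Kolmogorov's Stability Principle implies the schema $\nabla\alpha\leftrightarrow\neg\neg\alpha$ (for all problems $\alpha$).
   Context: QHC is a two-sorted first-order calculus. Its only terms are individual variables. Every formula is either a problem (denoted by Greek letters $\alpha,\beta,\gamma,\dots$) or a proposition (denoted by Latin letters $p,q,\dots$). Atomic formulas are proposition variables $p(t_1,\dots,t_n)$ (of proposition type), problem variables $\pi(t_1,\dots,t_n)$ (of problem type), and the constants $0$ (a proposition, classical falsity) and $\bot$ (a problem, intuitionistic absurdity). Propositions are closed under the classical connectives $\land,\lor,\to$ and quantifiers $\exists,\forall$; problems are closed under the intuitionistic connectives $\land,\lor,\to$ and quantifiers $\exists,\forall$ (the same symbols are used, distinguished by the type of the arguments). $\neg p$ abbreviates $p\to 0$, $\neg\alpha$ abbreviates $\alpha\to\bot$, and $\leftrightarrow$ is defined as usual. There are two type-conversion operators: if $p$ is a proposition then $!p$ is a problem, and if $\alpha$ is a problem then $?\alpha$ is a proposition. Deductive system of QHC: all axioms and rules of classical predicate logic applied to all propositions; all postulates and rules of intuitionistic predicate logic applied to all problems; the rules $p\,/\,!p$ and $\alpha\,/\,?\alpha$; and the schemas $?!p\to p$; $\alpha\to\, !?\alpha$; $!(p\to q)\to(!p\to !q)$; $?(\alpha\to\beta)\to(?\alpha\to ?\beta)$; $!0\to\bot$; $?(\alpha\land\beta)\leftrightarrow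 ?\alpha\land ?\beta$; $?(\alpha\lor\beta)\leftrightarrow ?\alpha\lor ?\beta$; $?\bot\to 0$; $?\exists x\,\alpha(x)\leftrightarrow\exists x\,?\alpha(x)$; $?\forall x\,\alpha(x)\to\forall x\,?\alpha(x)$ (usual variable side conditions implicit). $\vdash A$ means $A$ is derivable in QHC; $A\Rightarrow B$ means $\vdash A\to B$ and $A\Leftrightarrow B$ means $\vdash A\leftrightarrow B$ (with $A,B$ of the same type); $A\vdash B$ means $B$ is derivable in QHC from the premise $A$. Notation: $\Box p := ?!p$ (a proposition) and $\nabla\alpha := !?\alpha$ (a problem). QC and QH denote classical and intuitionistic predicate calculus. Hilbert's No Ignorabimus Principle is the schema $?(\gamma\lor\neg\gamma)$ for all problems $\gamma$. Kolmogorov's Stability Principle is the schema $\neg !\neg p\to !p$ for all propositions $p$. *)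

(* Deep embedding of the two-sorted calculus QHC.
   Individual variables are de Bruijn indices (the only terms). *)
From Stdlib Require Import List.

(* Propositions (classical sort) and problems (intuitionistic sort). *)
Inductive prop : Type :=
| pvar  : nat -> list nat -> prop      (* proposition variable p(t1,...,tn) *)
| pzero : prop
| pand  : prop -> prop -> prop
| por   : prop -> prop -> prop
| pimp  : prop -> prop -> prop
| pex   : prop -> prop                 (* binds de Bruijn index 0 *)
| pall  : prop -> prop                 (* binds de Bruijn index 0 *)
| pq    : prob -> prop                 (* ?alpha *)
with prob : Type :=
| avar  : nat -> list nat -> prob      (* problem variable pi(t1,...,tn) *)
| abot  : prob
| aand  : prob -> prob -> prob
| aor   : prob -> prob -> prob
| aimp  : prob -> prob -> prob
| aex   : prob -> prob
| aall  : prob -> prob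
| abang : prop -> prob.                (* !p *)

Definition pneg (p : prop) : prop := pimp p pzero.
Definition aneg (a : prob) : prob := aimp a abot.
Definition piff (p q : prop) : prop := pand (pimp p q) (pimp q p).
Definition aiff (a b : prob) : prob := aand (aimp a b) (aimp b a).

Definition up (f : nat -> nat) : nat -> nat :=
  fun k => match k with 0 => 0 | S k => S (f k) end.

Fixpoint ren_p (f : nat -> nat) (p : prop) : prop :=
  match p with
  | pvar n ts => pvar n (map f ts)
  | pzero => pzero
  | pand p q => pand (ren_p f p) (ren_p f q)
  | por p q => por (ren_p f p) (ren_p f q)
  | pimp p q => pimp (ren_p f p) (ren_p f q)
  | pex p => pex (ren_p (up f) p)
  | pall p => pall (ren_p (up f) p)
  | pq a => pq (ren_a f a)
  end
with ren_a (f : nat -> nat) (a : prob) : prob :=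
  match a with
  | avar n ts => avar n (map f ts)
  | abot => abot
  | aand a b => aand (ren_a f a) (ren_a f b)
  | aor a b => aor (ren_a f a) (ren_a f b)
  | aimp a b => aimp (ren_a f a) (ren_a f b)
  | aex a => aex (ren_a (up f) a)
  | aall a => aall (ren_a (up f) a)
  | abang p => abang (ren_p f p)
  end.

(* substitution of the variable t for the bound index 0 *)
Definition inst (t : nat) : nat -> nat :=
  fun k => match k with 0 => t | S k => k end.

Inductive form : Type :=
| FP : prop -> form
| FA : prob -> form.

Inductive Der (Ax : form -> Prop) : form -> Prop :=
| d_ax f : Ax f -> Der Ax f
| cK p q : Der Ax (FP (pimp p (pimp q p)))
| cS p q r : Der Ax (FP (pimp (pimp p (pimp q r)) (pimp (pimp p q) (pimp p r))))
| cAndI p q : Der Ax (FP (pimp p (pimp q (pand p q))))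
| cAndE1 p q : Der Ax (FP (pimp (pand p q) p))
| cAndE2 p q : Der Ax (FP (pimp (pand p q) q))
| cOrI1 p q : Der Ax (FP (pimp p (por p q)))
| cOrI2 p q : Der Ax (FP (pimp q (por p q)))
| cOrE p q r : Der Ax (FP (pimp (pimp p r) (pimp (pimp q r) (pimp (por p q) r))))
| cEFQ p : Der Ax (FP (pimp pzero p))
| cDNE p : Der Ax (FP (pimp (pneg (pneg p)) p))
| cAllE p t : Der Ax (FP (pimp (pall p) (ren_p (inst t) p)))
| cAllI p q : Der Ax (FP (pimp (pall (pimp (ren_p S q) p)) (pimp q (pall p))))
| cExI p t : Der Ax (FP (pimp (ren_p (inst t) p) (pex p)))
| cExE p q : Der Ax (FP (pimp (pall (pimp p (ren_p S q))) (pimp (pex p) q)))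
| cMP p q : Der Ax (FP (pimp p q)) -> Der Ax (FP p) -> Der Ax (FP q)
| cGen p : Der Ax (FP p) -> Der Ax (FP (pall p))
| iK a b : Der Ax (FA (aimp a (aimp b a)))
| iS a b c : Der Ax (FA (aimp (aimp a (aimp b c)) (aimp (aimp a b) (aimp a c))))
| iAndI a b : Der Ax (FA (aimp a (aimp b (aand a b))))
| iAndE1 a b : Der Ax (FA (aimp (aand a b) a))
| iAndE2 a b : Der Ax (FA (aimp (aand a b) b))
| iOrI1 a b : Der Ax (FA (aimp a (aor a b)))
| iOrI2 a b : Der Ax (FA (aimp b (aor a b)))
| iOrE a b c : Der Ax (FA (aimp (aimp a c) (aimp (aimp b c) (aimp (aor a b) c))))
| iEFQ a : Der Ax (FA (aimp abot a))
| iAllE a t : Der Ax (FA (aimp (aall a) (ren_a (inst t) a)))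
| iAllI a b : Der Ax (FA (aimp (aall (aimp (ren_a S b) a)) (aimp b (aall a))))
| iExI a t : Der Ax (FA (aimp (ren_a (inst t) a) (aex a)))
| iExE a b : Der Ax (FA (aimp (aall (aimp a (ren_a S b))) (aimp (aex a) b)))
| iMP a b : Der Ax (FA (aimp a b)) -> Der Ax (FA a) -> Der Ax (FA b)
| iGen a : Der Ax (FA a) -> Der Ax (FA (aall a))
| rBang p : Der Ax (FP p) -> Der Ax (FA (abang p))
| rQ a : Der Ax (FA a) -> Der Ax (FP (pq a))
| x1 p : Der Ax (FP (pimp (pq (abang p)) p))
| x2 a : Der Ax (FA (aimp a (abang (pq a))))
| x3 p q : Der Ax (FA (aimp (abang (pimp p q)) (aimp (abang p) (abang q))))
| x4 a b : Der Ax (FP (pimp (pq (aimp a b)) (pimp (pq a) (pq b))))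
| x5 : Der Ax (FA (aimp (abang pzero) abot))
| x6 a b : Der Ax (FP (piff (pq (aand a b)) (pand (pq a) (pq b))))
| x7 a b : Der Ax (FP (piff (pq (aor a b)) (por (pq a) (pq b))))
| x8 : Der Ax (FP (pimp (pq abot) pzero))
| x9 a : Der Ax (FP (piff (pq (aex a)) (pex (pq a))))
| x10 a : Der Ax (FP (pimp (pq (aall a)) (pall (pq a)))).

Definition nabla (a : prob) : prob := abang (pq a).

(* The schemas, as sets of all their instances. *)
Definition NoIgnorabimus : form -> Prop :=
  fun f => exists g : prob, f = FP (pq (aor g (aneg g))).
Definition NablaNegNeg : form -> Prop :=
  fun f => exists a : prob, f = FA (aiff (nabla a) (aneg (aneg a))).
Definition KolmogorovStability : form -> Prop :=
  fun f => exists p : prop, f = FA (aimp (aneg (abang (pneg p))) (abang p)).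

(* The converse ¬¬α → ∇α is then
   derived from No Ignorabimus (via ?α ∨ ?¬α and classical reasoning) and from
   Kolmogorov's principle (applied to p := ?α); conversely ∇α ↔ ¬¬α gives
   ?(γ ∨ ¬γ), since ¬¬(γ ∨ ¬γ) is intuitionistically provable and ?!p → p. *)
From Stdlib Require Import List.
Import ListNotations.

Section ImplicationalCalculus.
Variable T : Type.
Variable imp : T -> T -> T.
Variable Thm : T -> Prop.
Hypothesis axK : forall a b, Thm (imp a (imp b a)).
Hypothesis axS : forall a b c,
  Thm (imp (imp a (imp b c)) (imp (imp a b) (imp a c))).
Hypothesis mp : forall a b, Thm (imp a b) -> Thm a -> Thm b.

Fixpoint hyps (G : list T) (b : T) : T :=
  match G with nil => b | c :: G => imp c (hyps G b) end.

Lemma imp_refl a : Thm (imp a a).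
Proof. exact (mp _ _ (mp _ _ (axS a (imp a a) a) (axK a (imp a a))) (axK a a)). Qed.

Lemma imp_trans a b c : Thm (imp a b) -> Thm (imp b c) -> Thm (imp a c).
Proof.
  intros Hab Hbc.
  exact (mp _ _ (mp _ _ (axS a b c) (mp _ _ (axK _ a) Hbc)) Hab).
Qed.

Lemma hyps_weaken G b : Thm b -> Thm (hyps G b).
Proof.
  induction G as [|c G IH]; simpl; intro Hb; [exact Hb|].
  exact (mp _ _ (axK _ _) (IH Hb)).
Qed.

Lemma hyps_dist G a b :
  Thm (imp (hyps G (imp a b)) (imp (hyps G a) (hyps G b))).
Proof.
  induction G as [|c G IH]; simpl; [apply imp_refl|].
  eapply imp_trans; [exact (mp _ _ (axS _ _ _) (mp _ _ (axK _ c) IH))|].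
  apply axS.
Qed.

Lemma hyps_mp G a b : Thm (hyps G (imp a b)) -> Thm (hyps G a) -> Thm (hyps G b).
Proof. intros Hab Ha. exact (mp _ _ (mp _ _ (hyps_dist G a b) Hab) Ha). Qed.

Lemma hyps_intro_last G a : Thm (imp a (hyps G a)).
Proof.
  induction G as [|c G IH]; simpl; [apply imp_refl|].
  eapply imp_trans; [exact IH | apply axK].
Qed.

Lemma hyps_assumption G a : In a G -> Thm (hyps G a).
Proof.
  induction G as [|c G IH]; simpl; [tauto|].
  intros [<- | Hin]; [apply hyps_intro_last|].
  exact (mp _ _ (axK _ _) (IH Hin)).
Qed.

Lemma hyps_discharge G a b : Thm (hyps (G ++ [a]) b) -> Thm (hyps G (imp a b)).
Proof.
  enough (Happ : hyps (G ++ [a]) b = hyps G (imp a b)) by (rewrite Happ; auto).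
  induction G as [|c G IH]; simpl; congruence.
Qed.
End ImplicationalCalculus.

Arguments hyps {T} imp G b.

(* Closes a goal [Thm (hyps Γ a)] with [a] a member of the explicit list Γ. *)
Ltac by_assumption H :=
  apply H; simpl; repeat (first [left; reflexivity | right]).

Section QHC.
Variable Ax : form -> Prop.

Definition DerA (a : prob) : Prop := Der Ax (FA a).
Definition DerP (p : prop) : Prop := Der Ax (FP p).

Lemma probs_mp G a b :
  DerA (hyps aimp G (aimp a b)) -> DerA (hyps aimp G a) -> DerA (hyps aimp G b).
Proof. apply hyps_mp; [apply iK | apply iS | apply iMP]. Qed.

Lemma probs_weaken G b : DerA b -> DerA (hyps aimp G b).
Proof. apply hyps_weaken; [apply iK | apply iMP]. Qed.

Lemma probs_assumption G a : In a G -> DerA (hyps aimp G a).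
Proof. apply hyps_assumption; [apply iK | apply iS | apply iMP]. Qed.

Lemma probs_discharge G a b :
  DerA (hyps aimp (G ++ [a]) b) -> DerA (hyps aimp G (aimp a b)).
Proof. apply hyps_discharge. Qed.

Lemma probs_trans a b c : DerA (aimp a b) -> DerA (aimp b c) -> DerA (aimp a c).
Proof. apply imp_trans; [apply iK | apply iS | apply iMP]. Qed.

Lemma props_mp G p q :
  DerP (hyps pimp G (pimp p q)) -> DerP (hyps pimp G p) -> DerP (hyps pimp G q).
Proof. apply hyps_mp; [apply cK | apply cS | apply cMP]. Qed.

Lemma props_weaken G q : DerP q -> DerP (hyps pimp G q).
Proof. apply hyps_weaken; [apply cK | apply cMP]. Qed.

Lemma props_assumption G p : In p G -> DerP (hyps pimp G p).
Proof. apply hyps_assumption; [apply cK | apply cS | apply cMP]. Qed.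

Lemma props_discharge G p q :
  DerP (hyps pimp (G ++ [p]) q) -> DerP (hyps pimp G (pimp p q)).
Proof. apply hyps_discharge. Qed.

Lemma aiff_intro a b : DerA (aimp a b) -> DerA (aimp b a) -> DerA (aiff a b).
Proof. intros Hab Hba. exact (iMP _ _ _ (iMP _ _ _ (iAndI _ _ _) Hab) Hba). Qed.

Lemma quest_mono a b : DerA (aimp a b) -> DerP (pimp (pq a) (pq b)).
Proof. intro Hab. exact (cMP _ _ _ (x4 _ a b) (rQ _ _ Hab)). Qed.

Lemma bang_mono p q : DerP (pimp p q) -> DerA (aimp (abang p) (abang q)).
Proof. intro Hpq. exact (iMP _ _ _ (x3 _ p q) (rBang _ _ Hpq)). Qed.

Lemma bang_mono2 p q r :
  DerP (pimp p (pimp q r)) -> DerA (aimp (abang p) (aimp (abang q) (abang r))).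
Proof. intro H. eapply probs_trans; [apply bang_mono, H | apply x3]. Qed.

(* ?¬α → ¬?α, from ?(α → ⊥) → ?α → ?⊥ and ?⊥ → 0. *)
Lemma quest_neg a : DerP (pimp (pq (aneg a)) (pneg (pq a))).
Proof.
  change (DerP (hyps pimp [pq (aneg a); pq a] pzero)).
  eapply props_mp; [apply props_weaken, x8|].
  eapply props_mp; [eapply props_mp|].
  - apply props_weaken, (x4 _ a abot).
  - by_assumption props_assumption.
  - by_assumption props_assumption.
Qed.

Lemma nabla_contra a :
  DerA (aimp (nabla a) (aimp (abang (pneg (pq a))) abot)).
Proof.
  assert (Hclash : DerA (aimp (nabla a) (aimp (abang (pneg (pq a))) (abang pzero)))).
  { apply bang_mono2.
    change (DerP (hyps pimp [pq a; pneg (pq a)] pzero)).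
    eapply props_mp; by_assumption props_assumption. }
  change (DerA (hyps aimp [nabla a; abang (pneg (pq a))] abot)).
  eapply probs_mp; [apply probs_weaken, x5|].
  eapply probs_mp; [eapply probs_mp; [apply probs_weaken, Hclash|]|];
    by_assumption probs_assumption.
Qed.

(* In QHC itself ∇α → ¬¬α: a refutation of α yields !?¬α, hence !¬?α. *)
Lemma nabla_to_negneg a : DerA (aimp (nabla a) (aneg (aneg a))).
Proof.
  assert (Hrefute : DerA (aimp (aneg a) (abang (pneg (pq a))))).
  { eapply probs_trans; [apply x2 | apply bang_mono, quest_neg]. }
  change (DerA (hyps aimp [nabla a; aneg a] abot)).
  eapply probs_mp; [eapply probs_mp; [apply probs_weaken, nabla_contra|]|].
  - by_assumption probs_assumption.
  - eapply probs_mp; [apply probs_weaken, Hrefute | by_assumption probs_assumption].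
Qed.
End QHC.

(* Under No Ignorabimus, ?¬¬α → ?α: we have ?α ∨ ?¬α, and ?¬α contradicts
   ?¬¬α classically; hence ¬¬α → !?¬¬α → !?α. *)
Lemma negneg_to_nabla_NoIgnorabimus a :
  DerA NoIgnorabimus (aimp (aneg (aneg a)) (nabla a)).
Proof.
  set (Ax := NoIgnorabimus).
  assert (Hdecided : DerP Ax (por (pq a) (pq (aneg a)))).
  { eapply cMP; [eapply cMP; [apply cAndE1 | apply (x7 _ a (aneg a))]|].
    apply d_ax. exists a. reflexivity. }
  assert (Hstable : DerP Ax (pimp (pq (aneg (aneg a))) (pq a))).
  { change (DerP Ax (hyps pimp [pq (aneg (aneg a))] (pq a))).
    eapply props_mp; [apply props_weaken, cDNE|].
    apply props_discharge; simpl app.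
    eapply props_mp; [eapply props_mp; [eapply props_mp|]|].
    - apply props_weaken, (cOrE _ (pq a) (pq (aneg a)) pzero).
    - by_assumption props_assumption.
    - eapply props_mp; [apply props_weaken, quest_neg | by_assumption props_assumption].
    - apply props_weaken, Hdecided. }
  eapply probs_trans; [apply x2 | apply bang_mono, Hstable].
Qed.

(* Under Kolmogorov's principle for p := ?α: ¬¬α refutes !¬?α (by
   [nabla_contra] and α → ∇α), so ¬!¬?α, whence !?α. *)
Lemma negneg_to_nabla_Kolmogorov a :
  DerA KolmogorovStability (aimp (aneg (aneg a)) (nabla a)).
Proof.
  set (Ax := KolmogorovStability).
  assert (Hstability : DerA Ax (aimp (aneg (abang (pneg (pq a)))) (abang (pq a)))).
  { apply d_ax. exists (pq a). reflexivity. }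
  eapply probs_trans; [|exact Hstability].
  change (DerA Ax (hyps aimp [aneg (aneg a); abang (pneg (pq a))] abot)).
  eapply probs_mp; [by_assumption probs_assumption|].
  apply probs_discharge; simpl app.
  eapply probs_mp; [eapply probs_mp; [apply probs_weaken, (nabla_contra _ a)|]|].
  - eapply probs_mp; [apply probs_weaken, x2 | by_assumption probs_assumption].
  - by_assumption probs_assumption.
Qed.

Lemma negneg_excluded_middle Ax g : DerA Ax (aneg (aneg (aor g (aneg g)))).
Proof.
  change (DerA Ax (hyps aimp [aneg (aor g (aneg g))] abot)).
  eapply probs_mp; [by_assumption probs_assumption|].
  eapply probs_mp; [apply probs_weaken, iOrI2|].
  apply probs_discharge; simpl app.
  eapply probs_mp; [by_assumption probs_assumption|].
  eapply probs_mp; [apply probs_weaken, iOrI1 | by_assumption probs_assumption].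
Qed.

(* Under ∇α ↔ ¬¬α, No Ignorabimus follows: ∇(γ ∨ ¬γ) = !?(γ ∨ ¬γ) holds,
   and ?!p → p. *)
Lemma NoIgnorabimus_from_NablaNegNeg g : DerP NablaNegNeg (pq (aor g (aneg g))).
Proof.
  assert (Hnabla : DerA NablaNegNeg
            (aimp (aneg (aneg (aor g (aneg g)))) (nabla (aor g (aneg g))))).
  { eapply iMP; [apply iAndE2 | apply d_ax; eexists; reflexivity]. }
  eapply cMP; [apply x1 | apply rQ].
  exact (iMP _ _ _ Hnabla (negneg_excluded_middle _ g)).
Qed.

Theorem proposition2p27 :
  ((forall a : prob, Der NoIgnorabimus (FA (aiff (nabla a) (aneg (aneg a))))) /\
   (forall g : prob, Der NablaNegNeg (FP (pq (aor g (aneg g)))))) /\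
  (forall a : prob, Der KolmogorovStability (FA (aiff (nabla a) (aneg (aneg a))))).
Proof.
  split; [split|]; intro a.
  - apply aiff_intro; [apply nabla_to_negneg | apply negneg_to_nabla_NoIgnorabimus].
  - apply NoIgnorabimus_from_NablaNegNeg.
  - apply aiff_intro; [apply nabla_to_negneg | apply negneg_to_nabla_Kolmogorov].
Qed.
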